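(* $\mathbf{PL}<^{\mathrm{fin}}_{\mathrm{Learn}}E_{set}$: every finite $\mathbf{PL}$-learnable family of structures is $E_{set}$-learnable, and there is a finite family that is $E_{set}$-learnable but not $\mathbf{PL}$-learnable.
   Context: All structures are countable, have domain $\mathbb{N}$, are in a finite relational signature, and are identified with their atomic diagrams (elements of $2^{\mathbb{N}}$). A family of structures $\mathfrak{K}$ is a countable set of pairwise nonisomorphic such structures; $\mathcal{S}\restriction_s$ is the finite substructure on $\{0,\dots,s\}$; $\mathrm{LD}(\mathfrak{K})\subseteq2^{\mathbb{N}}$ is the set of structures with domain $\mathbb{N}$ isomorphic to a member of $\mathfrak{K}$ (subspace topology). For an equivalence relation $E$ on a space $X$, $\mathfrak{K}$ is $E$-learnable if there is a continuous $\Gamma:\mathrm{LD}(\mathfrak{K})\to X$ with $\mathcal{S}\cong\mathcal{S}'\iff\Gamma(\mathcal{S})E\Gamma(\mathcal{S}')$ on $\mathrm{LD}(\mathfrak{K})$. Fix a computable bijection $\langle\cdot,\cdot\rangle:\mathbb{N}^2\to\mathbb{N}$; for $p\in\mathbb{N}^{\mathbb{N}\times\mathbb{N}}$ let $p^{[m]}(n)=p(\langle m,n\rangle)$; $p\,E_{set}\,q\iff\{p^{[m]}:m\in\mathbb{N}\}=\{q^{[m]}:m\in\mathbb{N}\}$. A learner is an arbitrary function from $\{\mathcal{S}\restriction_s:\mathcal{S}\in\mathrm{LD}(\mathfrak{K})\}$ to $\{\ulcorner\mathcal{A}\urcorner:\mathcal{A}\in\mathfrak{K}\}\cup\{?\}$.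 $\mathfrak{K}$ is $\mathbf{PL}$-learnable if some learner $\mathbf{M}$ satisfies: for every $\mathcal{S}\in\mathrm{LD}(\mathfrak{K})$ and $\mathcal{A}\in\mathfrak{K}$, $\{n:\mathbf{M}(\mathcal{S}\restriction_n)=\ulcorner\mathcal{A}\urcorner\}$ is infinite iff $\mathcal{A}\cong\mathcal{S}$. $X\leq^{\mathrm{fin}}_{\mathrm{Learn}}Y$ means every finite $X$-learnable family is $Y$-learnable; $<^{\mathrm{fin}}_{\mathrm{Learn}}$ means $\leq^{\mathrm{fin}}_{\mathrm{Learn}}$ but not the converse. *)

From mathcomp Require Import all_boot.
Set Implicit Arguments. Unset Strict Implicit. Unset Printing Implicit Defensive.

(* A finite relational signature: the list of arities of its relation symbols. *)
Definition signature := seq nat.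

Definition arity (sg : signature) (i : 'I_(size sg)) : nat := nth 0 sg i.

(* A countable structure with domain nat: an interpretation of each relation
   symbol.  This carries exactly the information of its atomic diagram. *)
Definition Structure (sg : signature) : Type :=
  forall i : 'I_(size sg), (arity i).-tuple nat -> bool.

Definition iso (sg : signature) (S T : Structure sg) : Prop :=
  exists f : nat -> nat, bijective f /\
    forall (i : 'I_(size sg)) (t : (arity i).-tuple nat),
      S i t = T i (map_tuple f t).

Definition agree (sg : signature) (s : nat) (S T : Structure sg) : Prop :=
  forall (i : 'I_(size sg)) (t : (arity i).-tuple nat),
    all (fun x => x <= s) t -> S i t = T i t.

Definition noniso_family (sg : signature) (n : nat) (K : 'I_n -> Structure sg) : Prop :=
  forall i j : 'I_n, i != j -> ~ iso (K i) (K j).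

Definition LD (sg : signature) (n : nat) (K : 'I_n -> Structure sg)
  (S : Structure sg) : Prop := exists i : 'I_n, iso S (K i).

(* E_set on N^(N x N) (points written curried: p m n = p(<m,n>) = p^[m](n)). *)
Definition Eset (p q : nat -> nat -> nat) : Prop :=
  (forall m, exists m', forall k, p m k = q m' k) /\
  (forall m', exists m, forall k, q m' k = p m k).

(* Continuity of Gamma : LD(K) -> N^(N x N), with LD(K) a subspace of 2^N
   (basic neighbourhoods of S given by the finite substructures S|_s) and
   N^(N x N) carrying the product topology of discrete copies of N. *)
Definition continuous_on_LD (sg : signature) (n : nat)
  (K : 'I_n -> Structure sg) (G : Structure sg -> nat -> nat -> nat) : Prop :=
  forall S, LD K S -> forall m k, exists s, forall S', LD K S' ->
    agree s S S' -> G S' m k = G S m k.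

Definition Eset_learnable (sg : signature) (n : nat)
  (K : 'I_n -> Structure sg) : Prop :=
  exists G : Structure sg -> nat -> nat -> nat,
    continuous_on_LD K G /\
    forall S S', LD K S -> LD K S' -> (iso S S' <-> Eset (G S) (G S')).

(* A learner: a function of S|_s (represented by (s, S) with the value depending
   only on S|_s), returning a code (an index of K) or ? (None). *)
Definition learner (sg : signature) (n : nat) (K : 'I_n -> Structure sg)
  (M : nat -> Structure sg -> option 'I_n) : Prop :=
  forall s S S', LD K S -> LD K S' -> agree s S S' -> M s S = M s S'.

Definition PL_learnable (sg : signature) (n : nat)
  (K : 'I_n -> Structure sg) : Prop :=
  exists M : nat -> Structure sg -> option 'I_n, learner K M /\
    forall S, LD K S -> forall i : 'I_n,
      ((forall N, exists s, N <= s /\ M s S = Some i) <-> iso (K i) S).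

From mathcomp Require Import all_boot.
From Stdlib Require Import Classical ClassicalEpsilon.
Set Implicit Arguments. Unset Strict Implicit. Unset Printing Implicit Defensive.

(* Both halves rest on one observation: E_set sees exactly Sigma^0_2 properties.
   Continuously in a structure S one can build a table whose columns are all step
   functions together with, for every index i having a given Sigma^0_2 property,
   the constant column 2i; two such tables are E_set-equivalent iff the properties
   agree.  For a PL-learner, "i is output only finitely often", i.e. "S is not a
   copy of the i-th structure", is such a property.  Conversely, let A be an
   equivalence relation with infinitely many classes, all infinite, and B the same
   with one singleton class added.  "There is a singleton class" separates them,
   but a learner must guess B infinitely often on copies of B, every finite piece
   of a copy of A looks like a piece of a copy of B, and forcing those guesses
   along one copy of A makes the learner guess B infinitely often on A. *)


Lemma iso_sym sg (S T : Structure sg) : iso S T -> iso T S.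
Proof.
case=> f [[g fK gK] ST]; exists g; split; first by exists f.
move=> i t; rewrite ST; congr (T i _); apply: val_inj => /=.
by rewrite -map_comp (eq_map (f := f \o g) gK) map_id.
Qed.

Lemma iso_trans sg (S T U : Structure sg) : iso S T -> iso T U -> iso S U.
Proof.
case=> f [bf ST] [g [bg TU]]; exists (g \o f); split; first exact: bij_comp.
by move=> i t; rewrite ST TU; congr (U i _); apply: val_inj; rewrite /= map_comp.
Qed.

Lemma agree_le sg (S S' : Structure sg) s k : s <= k -> agree k S S' -> agree s S S'.
Proof.
move=> sk SS' i t ts; apply: SS'; apply/allP => x /(allP ts) xs.
exact: leq_trans xs sk.
Qed.

Lemma exists_leqP (P : pred nat) k :
  reflect (exists2 s, s <= k & P s) [exists s : 'I_k.+1, P s].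
Proof.
apply: (iffP existsP) => [[s Ps] | [s sk Ps]]; first by exists s; [rewrite -ltnS ltn_ord |].
by exists (Ordinal (sk : s < k.+1)).
Qed.

Lemma bit_double_inj (b b' : bool) i j : b + i.*2 = b' + j.*2 -> b = b' /\ i = j.
Proof.
move=> e; split; first by move: (congr1 odd e); rewrite !oddD !odd_double !oddb !addbF.
by move: (congr1 half e); rewrite !half_bit_double.
Qed.

(* Column [m] is [c] at the element of [T] coded by [m]; non-codes repeat [c x0]. *)
Section EnumTable.

Variables (T : countType) (x0 : T).

Definition enum_table (c : T -> nat -> nat) (m : nat) : nat -> nat :=
  c (odflt x0 (unpickle m)).

Lemma enum_table_sub (c c' : T -> nat -> nat) :
  (forall m, exists m', enum_table c m =1 enum_table c' m') <->
  (forall x, exists x', c x =1 c' x').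
Proof.
split=> cc' => [x | m].
  have [m' E] := cc' (pickle x); rewrite /enum_table pickleK in E.
  by exists (odflt x0 (unpickle m')).
have [x' E] := cc' (odflt x0 (unpickle m)).
by exists (pickle x'); rewrite /enum_table pickleK.
Qed.

End EnumTable.

(* [Q i a s] reads "the witness [a] for [i] is refuted at stage [s]". *)
Definition sigma2 (Q : nat -> nat -> nat -> bool) (i : nat) : Prop :=
  exists a, forall s, ~~ Q i a s.

(* Column (false, i, a) steps from 2i to 2i+1 at time a; column (true, i, a) does
   so at the first event Q i a s, hence is the constant 2i iff a witnesses
   sigma2 Q i.  The set of columns thus records exactly {i | sigma2 Q i}. *)
Definition sigma2_col (Q : nat -> nat -> nat -> bool) (x : bool * nat * nat) (k : nat) : nat :=
  let: (b, i, a) := x in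
  (if b then [exists s : 'I_k.+1, Q i a s] else a <= k) + i.*2.

Definition sigma2_table (Q : nat -> nat -> nat -> bool) : nat -> nat -> nat :=
  enum_table (false, 0, 0) (sigma2_col Q).

Lemma sigma2_col_local (Q Q' : nat -> nat -> nat -> bool) b i a k :
  (forall s, s <= k -> Q i a s = Q' i a s) ->
  sigma2_col Q (b, i, a) k = sigma2_col Q' (b, i, a) k.
Proof.
move=> QQ'; case: b => //=; congr (nat_of_bool _ + _).
by apply/exists_leqP/exists_leqP => -[s sk Qs]; exists s => //; move: Qs; rewrite QQ'.
Qed.

Lemma sigma2_col_sub (Q Q' : nat -> nat -> nat -> bool) :
  (forall x, exists x', sigma2_col Q x =1 sigma2_col Q' x') <->
  (forall i, sigma2 Q i -> sigma2 Q' i).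
Proof.
split=> [QQ' i [a Ha] | QQ' [[[] i] a]].
- have [[[b' i'] a'] E] := QQ' (true, i, a).
  have never k : [exists s : 'I_k.+1, Q i a s] = false.
    by apply/exists_leqP => -[s _]; apply/negP.
  have {}E k : false = (if b' then [exists s : 'I_k.+1, Q' i' a' s] else a' <= k) /\ i = i'.
    by apply: bit_double_inj; rewrite -(never k); exact: E k.
  have ii' := (E 0).2; subst i'; case: b' E => E; last by have [] := E a'; rewrite leqnn.
  exists a' => s; apply/negP => Qs.
  by have [+ _] := E s => /esym/exists_leqP; apply; exists s.
- have [ex | noQ] := classic (exists s, Q i a s).
    exists (false, i, ex_minn ex) => k /=; congr (nat_of_bool _ + _).
    case: ex_minnP => s0 Qs0 s0min.
    by apply/exists_leqP/idP => [[s sk /s0min s0s] | s0k]; [exact: leq_trans s0s sk | exists s0].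
  have [a' Ha'] : sigma2 Q' i.
    by apply: QQ'; exists a => s; apply/negP => Qs; apply: noQ; exists s.
  exists (true, i, a') => k /=; congr (nat_of_bool _ + _).
  by apply/exists_leqP/exists_leqP => -[s _ Qs]; [case: noQ; exists s | move: (Ha' s); rewrite Qs].
- by exists (false, i, a).
Qed.

Lemma Eset_sigma2_table (Q Q' : nat -> nat -> nat -> bool) :
  Eset (sigma2_table Q) (sigma2_table Q') <-> (forall i, sigma2 Q i <-> sigma2 Q' i).
Proof.
rewrite /Eset; split=> [[QQ' Q'Q] i | QQ'].
  move: QQ' Q'Q => /enum_table_sub/sigma2_col_sub QQ' /enum_table_sub/sigma2_col_sub Q'Q.
  by split; [apply: QQ' | apply: Q'Q].
by split; apply/enum_table_sub/sigma2_col_sub => i; apply QQ'.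
Qed.

Lemma Eset_learnable_of_sigma2 sg n (K : 'I_n -> Structure sg)
    (Q : Structure sg -> nat -> nat -> nat -> bool) :
  (forall S i a k, LD K S -> exists u, forall S', LD K S' -> agree u S S' ->
     forall s, s <= k -> Q S i a s = Q S' i a s) ->
  (forall S S', LD K S -> LD K S' ->
     iso S S' <-> (forall i, sigma2 (Q S) i <-> sigma2 (Q S') i)) ->
  Eset_learnable K.
Proof.
move=> Qlocal Qiso; exists (fun S => sigma2_table (Q S)); split=> [S HS m k | S S' HS HS'].
  rewrite /sigma2_table /enum_table; case: (odflt _ _) => [[b i] a].
  have [u Hu] := Qlocal S i a k HS; exists u => S' HS' SS'.
  by apply: sigma2_col_local => s sk; rewrite (Hu S').
exact: iff_trans (Qiso _ _ HS HS') (iff_sym (Eset_sigma2_table _ _)).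
Qed.

Definition output_events sg n (M : nat -> Structure sg -> option 'I_n)
  (S : Structure sg) (i N s : nat) : bool := (N <= s) && (omap val (M s S) == Some i).

Section OutputEvents.

Variables (sg : signature) (n : nat) (M : nat -> Structure sg -> option 'I_n) (S : Structure sg).

Lemma sigma2_output_events (i : 'I_n) :
  sigma2 (output_events M S) i <-> ~ forall N, exists s, N <= s /\ M s S = Some i.
Proof.
have E s : (omap val (M s S) == Some (val i)) = (M s S == Some i) by case: (M s S).
split=> [[N HN] io | nio].
  by have [s [Ns Ms]] := io N; move: (HN s); rewrite /output_events E Ms Ns eqxx.
apply: NNPP => ns; apply: nio => N; apply: NNPP => nN; apply: ns; exists N => s.
by rewrite /output_events E; apply/negP => /andP[Ns /eqP Ms]; apply: nN; exists s.
Qed.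

Lemma sigma2_output_events_ge i : n <= i -> sigma2 (output_events M S) i.
Proof.
move=> ni; exists 0 => s; rewrite /output_events; case: (M s S) => [j|] //=.
by apply/eqP => -[ji]; move: (ltn_ord j); rewrite ji ltnNge ni.
Qed.

End OutputEvents.

Lemma Eset_learnable_of_PL sg n (K : 'I_n -> Structure sg) :
  PL_learnable K -> Eset_learnable K.
Proof.
case=> M [HM HPL]; apply: (Eset_learnable_of_sigma2 (Q := output_events M)).
  move=> S i N k HS; exists k => S' HS' SS' s sk.
  by rewrite /output_events (HM s S S') //; apply: agree_le SS'.
have out_iso S (HS : LD K S) (i : 'I_n) :
    sigma2 (output_events M S) i <-> ~ iso (K i) S.
  exact: iff_trans (sigma2_output_events _ _ _) (not_iff_compat (HPL S HS i)).
move=> S S' HS HS'; split=> [SS' i | same].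
  have [ni | lt_in] := leqP n i; first by split=> _; apply: sigma2_output_events_ge.
  have -> : i = Ordinal lt_in by [].
  rewrite !out_iso //; split=> nI I; apply: nI.
    exact: iso_trans I (iso_sym SS').
  exact: iso_trans I SS'.
have [j Sj] := HS.
have nS : ~ sigma2 (output_events M S) j by move/(out_iso _ HS); apply; apply: iso_sym.
have nS' : ~ sigma2 (output_events M S') j by move/(same j).
apply: iso_trans Sj _; apply: NNPP => nI; exact/nS'/(out_iso _ HS' j).2.
Qed.

Definition sg2 : signature := [:: 2].

Definition rel2 (S : Structure sg2) (a b : nat) : bool := S ord0 [tuple a; b].

Definition kerS (c : nat -> nat) : Structure sg2 :=
  fun _ t => if tval t is [:: a; b] then c a == c b else false.

Lemma iso_kerS (c f : nat -> nat) : bijective f -> iso (kerS (c \o f)) (kerS c).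
Proof. by move=> bf; exists f; split=> // i [[|a [|b [|? ?]]] ?]. Qed.

Definition same_pattern (s : nat) (c d : nat -> nat) : Prop :=
  forall a b, a <= s -> b <= s -> (c a == c b) = (d a == d b).

Lemma agree_kerS s (c d : nat -> nat) : same_pattern s c d -> agree s (kerS c) (kerS d).
Proof.
by move=> cd i [[|a [|b [|? ?]]] ?] //= /and3P[ha hb _]; apply: cd.
Qed.

Definition has_singleton (S : Structure sg2) : Prop :=
  exists x, forall y, y != x -> ~~ rel2 S x y.

Lemma has_singleton_iso (S T : Structure sg2) : iso S T -> has_singleton S -> has_singleton T.
Proof.
case=> f [[g fK gK] ST] [x Hx]; exists (f x) => y yx.
have gyx : g y != x by apply: contra yx => /eqP <-; rewrite gK.
have fxy : map_tuple f [tuple x; g y] = [tuple f x; y] by apply: val_inj; rewrite /= gK.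
by move: (Hx _ gyx); rewrite /rel2 ST fxy.
Qed.

(* [x] and [y] are in the same class iff x+1 and y+1 have the same 2-adic
   valuation: infinitely many classes, all infinite. *)
Definition cls (x : nat) : nat := logn 2 x.+1.

(* Kernel: the classes of [cls] restricted to positive numbers, plus {0}. *)
Definition clsB (x : nat) : nat := if x is 0 then 0 else (cls x).+1.

Definition cls_rep (c m : nat) : nat := (2 ^ c * m.*2.+1).-1.

Lemma cls_rep_cls c m : cls (cls_rep c m) = c.
Proof.
rewrite /cls /cls_rep prednK ?muln_gt0 ?expn_gt0 //.
rewrite lognM ?expn_gt0 // pfactorK // logn_coprime ?addn0 //.
by rewrite coprime2n /= odd_double.
Qed.

Lemma leq_cls_rep c m : m <= cls_rep c m.
Proof.
rewrite /cls_rep -ltnS prednK ?muln_gt0 ?expn_gt0 //.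
by rewrite (leq_trans _ (leq_pmull _ (expn_gt0 2 c))) // ltnS -addnn leq_addr.
Qed.

Lemma cls_le x : cls x <= x.
Proof.
rewrite /cls -ltnS (leq_trans (ltn_expl _ (isT : 1 < 2))) //.
exact: dvdn_leq (pfactor_dvdnn 2 x.+1).
Qed.

Lemma cls0 : cls 0 = 0.
Proof. by rewrite /cls logn1. Qed.

Lemma clsB_pos x : 0 < x -> clsB x = (cls x).+1.
Proof. by case: x. Qed.

Definition K2 (i : 'I_2) : Structure sg2 := kerS (if val i is 0 then cls else clsB).

Definition iB : 'I_2 := ord_max.

Lemma has_singleton_K2 (i : 'I_2) : has_singleton (K2 i) <-> i = iB.
Proof.
case: i => [[|[|//]] i2]; split.
- case=> x /(_ (cls_rep (cls x) x.+1)).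
  by rewrite /rel2 /K2 /kerS /= cls_rep_cls eqxx neq_ltn leq_cls_rep orbT => /(_ isT).
- by move/(congr1 val).
- by move=> _; apply: val_inj.
- by move=> _; exists 0 => -[|y].
Qed.

Lemma iso_K2_singleton (S : Structure sg2) (i : 'I_2) :
  iso S (K2 i) -> has_singleton S <-> i = iB.
Proof.
move=> SK; rewrite -has_singleton_K2; split; apply: has_singleton_iso => //.
exact: iso_sym.
Qed.

Lemma ord2_eq (i j : 'I_2) : (i = iB <-> j = iB) -> i = j.
Proof.
have ord0_or_iB (k : 'I_2) : k = ord0 \/ k = iB.
  by case: k => [[|[|//]] k2]; [left | right]; apply: val_inj.
by case: (ord0_or_iB i) (ord0_or_iB j) => -> [->|->] // [ij ji]; [exact: ji | exact/esym/ij].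
Qed.

Lemma noniso_K2 : noniso_family K2.
Proof.
move=> i j /eqP nij ij; apply: nij; apply: ord2_eq.
by rewrite -(iso_K2_singleton ij) has_singleton_K2.
Qed.

Definition singleton_events (S : Structure sg2) (_ x y : nat) : bool :=
  (y != x) && rel2 S x y.

Lemma sigma2_singleton_events S i : sigma2 (singleton_events S) i <-> has_singleton S.
Proof.
split=> -[x Hx]; exists x => y; first by move=> yx; move: (Hx y); rewrite /singleton_events yx.
by rewrite /singleton_events; case: eqP => //= /eqP /Hx.
Qed.

Lemma Eset_learnable_K2 : Eset_learnable K2.
Proof.
apply: (Eset_learnable_of_sigma2 (Q := singleton_events)).
  move=> S i x k _; exists (x + k) => S' _ SS' s sk.
  by rewrite /singleton_events /rel2 SS' //= leq_addr (leq_trans sk (leq_addl _ _)).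
move=> S S' [i Si] [j S'j]; split=> [SS' x | same].
  rewrite !sigma2_singleton_events; split; apply: has_singleton_iso => //.
  exact: iso_sym.
have ij : i = j.
  apply: ord2_eq; rewrite -(iso_K2_singleton Si) -(iso_K2_singleton S'j).
  by rewrite -!(sigma2_singleton_events _ 0).
by apply: iso_trans Si _; rewrite ij; apply: iso_sym.
Qed.

Definition transp (a b x : nat) : nat := if x == a then b else if x == b then a else x.

Lemma transpK a b : involutive (transp a b).
Proof.
move=> x; rewrite /transp.
case: (eqVneq x a) => [->|xa]; first by rewrite eqxx; case: eqVneq.
case: (eqVneq x b) => [->|xb]; first by rewrite eqxx.
by rewrite (negbTE xa) (negbTE xb).
Qed.

Lemma transp_out a b x : x != a -> x != b -> transp a b x = x.
Proof. by rewrite /transp => /negbTE-> /negbTE->. Qed.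

Lemma transp_r a b : transp a b b = a.
Proof. by rewrite /transp; case: eqVneq => [->|]; rewrite ?eqxx. Qed.

Lemma bounded_on_segment (h : nat -> nat) r : exists B, forall x, x <= r -> h x < B.
Proof.
exists (\max_(y < r.+1) h y).+1 => x xr.
by rewrite ltnS (@leq_bigmax _ (fun y : 'I_r.+1 => h y) (Ordinal (xr : x < r.+1))).
Qed.

Lemma bij_of_inj_surj (h : nat -> nat) :
  injective h -> (forall y, exists x, h x == y) -> bijective h.
Proof.
move=> h_inj h_surj; exists (fun y => ex_minn (h_surj y)) => [x | y].
  by case: ex_minnP => x' /eqP hx _; apply: h_inj.
by case: ex_minnP => x' /eqP.
Qed.

(* Because every class of cls is infinite and there are infinitely many classes,
   a new point can always be mapped so as to join any old class or a new one. *)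
Lemma extend_pattern_step (e h : nat -> nat) s :
  bijective h -> same_pattern s (cls \o h) e ->
  exists h', [/\ bijective h', forall x, x <= s -> h' x = h x
                             & same_pattern s.+1 (cls \o h') e].
Proof.
move=> bh pat; have [B hB] := bounded_on_segment h s.
have [v Bv vcls] : exists2 v, B <= v &
    forall y, y <= s -> (cls v == cls (h y)) = (e s.+1 == e y).
  have [[y0 y0s ey0] | none] := classic (exists2 y, y <= s & e s.+1 == e y).
    exists (cls_rep (cls (h y0)) B) => [|y ys]; first exact: leq_cls_rep.
    by rewrite cls_rep_cls (eqP ey0) (pat y0 y).
  exists (cls_rep B.+1 B) => [|y ys]; first exact: leq_cls_rep.
  rewrite cls_rep_cls; have -> : (e s.+1 == e y) = false.
    by apply/negbTE/negP => ey; apply: none; exists y.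
  by apply/negbTE; rewrite neq_ltn ltnS (leq_trans (cls_le _) (ltnW (hB y ys))) orbT.
have keep y : y <= s -> transp v (h s.+1) (h y) = h y.
  move=> ys; apply: transp_out; first by rewrite neq_ltn (leq_trans (hB y ys) Bv).
  by rewrite (inj_eq (bij_inj bh)) neq_ltn ltnS ys.
exists (transp v (h s.+1) \o h); split.
- exact: bij_comp (inv_bij (transpK _ _)) bh.
- exact: keep.
- move=> a b; rewrite leq_eqVlt => /predU1P[-> | ha]; rewrite leq_eqVlt => /predU1P[-> | hb] /=;
    rewrite ?transp_r ?keep ?eqxx //.
  + exact: vcls.
  + by rewrite [cls _ == _]eq_sym vcls // eq_sym.
  + exact: pat.
Qed.

Lemma extend_pattern (e f : nat -> nat) r s :
  bijective f -> r <= s -> same_pattern r (cls \o f) e ->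
  exists f', [/\ bijective f', forall x, x <= r -> f' x = f x
                             & same_pattern s (cls \o f') e].
Proof.
move=> bf; elim: s => [|s IH]; first by rewrite leqn0 => /eqP-> pat; exists f.
rewrite leq_eqVlt ltnS => /predU1P[-> pat | rs pat]; first by exists f.
have [h [bh hf pat_h]] := IH rs pat.
have [h' [bh' h'h pat_h']] := extend_pattern_step bh pat_h.
exists h'; split=> // x xr; rewrite h'h ?hf //; exact: leq_trans xr rs.
Qed.

(* Swapping 0 with a fresh point w of class 0 makes clsB o g = S o cls o f on [0, r]. *)
Lemma B_copy_of_A_pattern (f : nat -> nat) r :
  bijective f -> exists2 g, bijective g & same_pattern r (cls \o f) (clsB \o g).
Proof.
move=> bf; have [B fB] := bounded_on_segment f r.
pose w := cls_rep 0 B.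
have shift a : a <= r -> clsB (transp 0 w (f a)) = (cls (f a)).+1.
  move=> ar; have faw : f a < w := leq_trans (fB a ar) (leq_cls_rep _ _).
  have [fa0 | fa0] := eqVneq (f a) 0.
    by rewrite fa0 /transp eqxx clsB_pos ?cls_rep_cls ?cls0 // -fa0.
  by rewrite transp_out ?clsB_pos ?lt0n // neq_ltn faw.
exists (transp 0 w \o f); first exact: bij_comp (inv_bij (transpK _ _)) bf.
by move=> a b ar br /=; rewrite !shift.
Qed.

Section BijectiveLimit.

Variables (f : nat -> nat -> nat) (r : nat -> nat).
Hypotheses (r_incr : forall t, r t < r t.+1)
  (f_stable : forall t x, x <= r t -> f t.+1 x = f t x)
  (f_inj : forall t, injective (f t))
  (f_cover : forall y, exists t x, x <= r t /\ f t x = y).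

Lemma leq_r t : t <= r t.
Proof. by elim: t => // t IH; exact: leq_ltn_trans IH (r_incr t). Qed.

Lemma f_stable_le t u x : t <= u -> x <= r t -> f u x = f t x.
Proof.
have r_mono : {homo r : i j / i <= j} := homo_leq leqnn (@leq_trans) (fun t => ltnW (r_incr t)).
elim: u => [|u IH]; first by rewrite leqn0 => /eqP->.
rewrite leq_eqVlt => /predU1P[-> // | tu] xr.
by rewrite f_stable ?IH // (leq_trans xr (r_mono t u tu)).
Qed.

Definition limit (x : nat) : nat := f x x.

Lemma limitE t x : x <= r t -> limit x = f t x.
Proof.
move=> xr; rewrite /limit; have [xt | tx] := leqP x t.
  by rewrite (f_stable_le xt) // leq_r.
by rewrite (f_stable_le (ltnW tx)).
Qed.

Lemma limit_bij : bijective limit.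
Proof.
apply: bij_of_inj_surj => [x y | y].
  have xr : x <= r (maxn x y) by rewrite (leq_trans (leq_maxl x y)) ?leq_r.
  have yr : y <= r (maxn x y) by rewrite (leq_trans (leq_maxr x y)) ?leq_r.
  by rewrite (limitE xr) (limitE yr); apply: f_inj.
by have [t [x [xr <-]]] := f_cover y; exists x; rewrite (limitE xr).
Qed.

End BijectiveLimit.

Section Forcing.

(* A finite-extension (Banach-Mazur) construction in the space of permutations of nat. *)
Variable good : nat -> (nat -> nat) -> Prop.
Hypothesis good_ext : forall f r, bijective f ->
  exists f' s, [/\ bijective f', forall x, x <= r -> f' x = f x, r < s & good s f'].

Lemma good_ext_covering (f : nat -> nat) r t : bijective f ->
  exists f' r', [/\ bijective f', forall x, x <= r -> f' x = f x,
    exists2 s, r < s <= r' & good s f' &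
    forall y, y <= t -> exists2 x, x <= r' & f' x = y].
Proof.
move=> bf; have [f' [s [bf' f'f rs gs]]] := good_ext r bf.
have [g f'K gK] := bf'; have [B gB] := bounded_on_segment g t.
exists f', (maxn s B); split=> //; first by exists s; rewrite ?rs ?leq_maxl.
by move=> y yt; exists (g y); rewrite ?gK // leq_max (ltnW (gB y yt)) orbT.
Qed.

Lemma bijective_limit : exists2 fL, bijective fL &
  forall N, exists s f', [/\ N <= s, bijective f', good s f' & forall x, x <= s -> fL x = f' x].
Proof.
pose step (pt : (nat -> nat) * nat * nat) (q : (nat -> nat) * nat) :=
  bijective pt.1.1 -> [/\ bijective q.1, forall x, x <= pt.1.2 -> q.1 x = pt.1.1 x,
    exists2 s, pt.1.2 < s <= q.2 & good s q.1 &
    forall y, y <= pt.2 -> exists2 x, x <= q.2 & q.1 x = y].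
have [F HF] : exists F, forall pt, step pt (F pt).
  apply: choice => -[[f r] t]; have [bf | nbf] := classic (bijective f); last by exists (f, r).
  by have [f' [r' H]] := good_ext_covering r t bf; exists (f', r').
pose st := fix st t := if t is t'.+1 then F (st t', t') else (id, 0).
have st_bij t : bijective (st t).1.
  by elim: t => [|t IH]; [exists id | case: (HF (st t, t) IH)].
have stS t := HF (st t, t) (st_bij t).
have r_incr t : (st t).2 < (st t.+1).2.
  by case: (stS t) => _ _ [s /andP[ts st1] _] _; exact: leq_trans ts st1.
have f_stable t x : x <= (st t).2 -> (st t.+1).1 x = (st t).1 x.
  by case: (stS t) => _ stable _ _; exact: stable.
have f_cover y : exists t x, x <= (st t).2 /\ (st t).1 x = y.
  by case: (stS y) => _ _ _ /(_ y (leqnn y))[x xr fx]; exists y.+1, x.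
have f_inj t : injective (st t).1 by apply: bij_inj.
exists (limit (fun t => (st t).1)); first exact: limit_bij r_incr f_stable f_inj f_cover.
move=> N; case: (stS N) => _ _ [s /andP[Ns sN1] gs] _.
exists s, (st N.+1).1; split=> //.
- exact: leq_trans (leq_r r_incr N) (ltnW Ns).
- move=> x xs; have xN1 : x <= (st N.+1).2 := leq_trans xs sN1.
  exact: (@limitE (fun t => (st t).1) _ r_incr f_stable _ _ xN1).
Qed.

End Forcing.

Lemma K2_not_PL_learnable : ~ PL_learnable K2.
Proof.
case=> M [HM HPL].
have LD_A f : bijective f -> LD K2 (kerS (cls \o f)) by exists ord0; exact: iso_kerS.
have [f r bf | fL bL often] := bijective_limit (good := fun s f => M s (kerS (cls \o f)) = Some iB).
  have [g bg fg] := B_copy_of_A_pattern r bf.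
  have LD_g : LD K2 (kerS (clsB \o g)) by exists iB; exact: iso_kerS.
  have [s [rs Ms]] := (HPL _ LD_g iB).2 (iso_sym (iso_kerS clsB bg)) r.+1.
  have [f' [bf' f'f pat]] := extend_pattern bf (ltnW rs) fg.
  exists f', s; split=> //; rewrite -Ms; apply: HM => //; first exact: LD_A.
  exact: agree_kerS.
have: iso (K2 iB) (kerS (cls \o fL)).
  apply/(HPL _ (LD_A _ bL)) => N; have [s [f' [Ns bf' Ms fLf']]] := often N.
  exists s; split=> //; rewrite -Ms; apply: HM; try exact: LD_A.
  by apply: agree_kerS => a b ha hb /=; rewrite !fLf'.
by move/iso_trans/(_ (iso_kerS cls bL)); exact: (@noniso_K2 iB ord0).
Qed.

Theorem mainTheorem20 :
  (forall (sg : signature) (n : nat) (K : 'I_n -> Structure sg),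
      noniso_family K -> PL_learnable K -> Eset_learnable K) /\
  (exists (sg : signature) (n : nat) (K : 'I_n -> Structure sg),
      noniso_family K /\ Eset_learnable K /\ ~ PL_learnable K).
Proof.
split=> [sg n K _ | ]; first exact: Eset_learnable_of_PL.
exists sg2, 2, K2; split; first exact: noniso_K2.
by split; [exact: Eset_learnable_K2 | exact: K2_not_PL_learnable].
Qed.
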